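(* For all $j\ge0$ and all $x,u\in O$: (1) $D_j(\alpha x)=\alpha^jD_j(x)$ for $\alpha\in\mathbf{F}_q^*$; (2) $D_j(x+u)=\sum_{e+f=j}\binom{j}{e}D_e(x)D_f(u)$; (3) $D'_j(\alpha x)=\alpha^jD'_j(x)$ for $\alpha\in\mathbf{F}_q^*$; (4) $D'_j(x+u)=\sum_{e+f=j}\binom{j}{e}D_e(x)D'_f(u)$. Here the sums run over pairs of nonnegative integers $(e,f)$ and binomial coefficients are read in $\mathbf{F}_q$.
   Context: Let $q$ be a prime power, $O=\mathbf{F}_q[[T]]$. Hasse derivatives: $\mathcal{D}_n(\sum_ia_iT^i)=\sum_i\binom{i}{n}a_iT^{i-n}$ (binomials in $\mathbf{F}_q$). For $j\ge0$ with base-$q$ expansion $j=\alpha_0+\alpha_1q+\cdots+\alpha_sq^s$ ($0\le\alpha_i<q$): $D_j(x)=\prod_{n=0}^s\mathcal{D}_n(x)^{\alpha_n}$ ($D_0=1$), and $D'_j(x)=\prod_{n=0}^sD'_{\alpha_nq^n}(x)$ where $D'_{\alpha q^n}(x)=\mathcal{D}_n(x)^\alpha$ if $0\le\alpha<q-1$ and $D'_{(q-1)q^n}(x)=\mathcal{D}_n(x)^{q-1}-1$. *)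

From HB Require Import structures.
From mathcomp Require Import all_boot all_order all_algebra all_field.
Set Implicit Arguments. Unset Strict Implicit. Unset Printing Implicit Defensive.
Import GRing.Theory.
Local Open Scope ring_scope.

(* O = F_q[[T]] for a finite field F with q = #|F| elements.
   A formal power series is represented by its coefficient sequence
   (x k = coefficient of T^k). *)
Definition ps (F : finFieldType) := nat -> F.

Section PS.
Variable F : finFieldType.

Definition ps_add (x y : ps F) : ps F := fun k => x k + y k.
Definition ps_sub (x y : ps F) : ps F := fun k => x k - y k.
Definition ps_scale (a : F) (x : ps F) : ps F := fun k => a * x k.
Definition ps_one : ps F := fun k => if k == 0%N then 1 else 0.
Definition ps_mul (x y : ps F) : ps F :=
  fun k => \sum_(i < k.+1) x i * y (k - i)%N.
Definition ps_pow (x : ps F) (n : nat) : ps F := iter n (ps_mul x) ps_one.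
Definition ps_prod (m : nat) (f : nat -> ps F) : ps F :=
  foldr ps_mul ps_one (map f (iota 0 m)).
Definition ps_sum (m : nat) (f : nat -> ps F) : ps F :=
  fun k => \sum_(e < m) f e k.

(* Hasse derivative: D_n (sum a_i T^i) = sum binom(i,n) a_i T^(i-n) *)
Definition hasse (n : nat) (x : ps F) : ps F :=
  fun k => ('C(k + n, n))%:R * x (k + n)%N.

Definition q := #|F|.

Definition digit (j n : nat) : nat := (j %/ q ^ n) %% q.
Definition topdigit (j : nat) : nat := trunc_log q j.

Definition Dj (j : nat) (x : ps F) : ps F :=
  ps_prod (topdigit j).+1 (fun n => ps_pow (hasse n x) (digit j n)).

Definition Dprime_block (n a : nat) (x : ps F) : ps F :=
  if a == q.-1 then ps_sub (ps_pow (hasse n x) a) ps_one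
  else ps_pow (hasse n x) a.

Definition Dpj (j : nat) (x : ps F) : ps F :=
  ps_prod (topdigit j).+1 (fun n => Dprime_block n (digit j n) x).

End PS.

From HB Require Import structures.
From mathcomp Require Import all_boot all_order all_algebra all_field.
From mathcomp Require Import zify ring.
From Stdlib Require Import FunctionalExtensionality.
Set Implicit Arguments. Unset Strict Implicit. Unset Printing Implicit Defensive.
Import GRing.Theory.
Local Open Scope ring_scope.

(* Truncating power series to polynomials (ps_approx) turns every claim into an identity in
   the commutative F-algebra {poly F}.  Since each Hasse derivative D_n is F-linear, D_j(x) and
   D'_j(x) become digit products prod_n f_n(alpha_n) of the blocks f_n(d) = P_n^d, resp.
   P_n^d - [d = q - 1], and each block is a binomial convolution in d: this is the binomial
   theorem, the correction term of D' meeting only the summand e = 0 because d < q.  Lucas'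
   theorem C(r + s q, c + e q) = C(r, c) C(s, e) in F, a consequence of (1 + X)^q = 1 + X^q,
   shows that digit products of binomial convolutions are binomial convolutions, which gives
   (2) and (4).  For (1) and (3), alpha^q = alpha gives alpha^j = prod_n alpha^(alpha_n), and
   alpha^(q-1) = 1 absorbs the correction term. *)

Lemma modn_addMl d c i : (c < d)%N -> ((c + i * d) %% d = c)%N.
Proof. by move=> lt_cd; rewrite addnC modnMDl modn_small. Qed.

Lemma divn_addMl d c i : (c < d)%N -> ((c + i * d) %/ d = i)%N.
Proof.
by move=> lt_cd; rewrite addnC divnMDl ?divn_small ?addn0 // (leq_ltn_trans _ lt_cd).
Qed.

Lemma sum_ord_mul (V : nmodType) n k (h : nat -> V) :
  \sum_(e < n * k) h e = \sum_(i < n) \sum_(c < k) h (c + i * k)%N.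
Proof.
rewrite -(big_mkord xpredT h) big_nat_mul big_mkord; apply: eq_bigr => i _.
by rewrite mulSn addnC -{1}(add0n (i * k)%N) big_addn addKn big_mkord.
Qed.

Lemma coefM_comp_polyXn (R : nzSemiRingType) (p P : {poly R}) n c e :
  (size p <= n)%N -> (c < n)%N -> (p * (P \Po 'X^n))`_(c + e * n) = p`_c * P`_e.
Proof.
move=> size_p lt_cn; have n_gt0 : (0 < n)%N by apply: leq_ltn_trans lt_cn.
have le_c : (c < (c + e * n).+1)%N by rewrite ltnS leq_addr.
rewrite coefM (bigD1 (Ordinal le_c)) //= addKn coef_comp_poly_Xn // dvdn_mull //.
rewrite mulnK // big1 ?addr0 // => i ne_ic.
have [lt_in | le_ni] := ltnP i n; last first.
  by rewrite nth_default ?mul0r // (leq_trans size_p).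
rewrite coef_comp_poly_Xn // ifN ?mulr0 //; apply: contra ne_ic => dvd_n.
have le_i : (i <= c + e * n)%N by rewrite -ltnS.
move: dvd_n; rewrite -eqn_mod_dvd // modn_addMl // modn_small // => /eqP eq_ci.
exact/eqP/val_inj/esym.
Qed.

Section Lucas.
Variable F : finFieldType.
Local Notation q := (q F).

Lemma card_gt1 : (1 < q)%N.
Proof. exact: finNzRing_gt1. Qed.

Lemma expf_card_pred (a : F) : a != 0 -> a ^+ q.-1 = 1.
Proof.
move=> a_neq0; apply: (mulIf a_neq0).
by rewrite mul1r -exprSr prednK ?expf_card // ltnW // card_gt1.
Qed.

Lemma exprXD1_card : ('X + 1 : {poly F}) ^+ q = 'X^q + 1.
Proof.
have [p p_pr pcharFp] := finPcharP F.
have -> : q = (p ^ logn p q)%N := card_pprimeChar pcharFp.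
by rewrite exprDn_pchar ?expr1n // pnatX pnatE // pchar_poly pcharFp.
Qed.

Lemma coef_exprXD1 n i : (('X + 1 : {poly F}) ^+ n)`_i = 'C(n, i)%:R.
Proof.
rewrite exprD1n; under eq_bigr do rewrite -scaler_nat.
rewrite coef_sumMXn (big_ord1_eq _ (fun k => 'C(n, k)%:R)) ltnS.
by case: leqP => // /bin_small ->.
Qed.

Lemma binomial_lucas r s c e : (r < q)%N -> (c < q)%N ->
  'C(r + s * q, c + e * q)%:R = 'C(r, c)%:R * 'C(s, e)%:R :> F.
Proof.
move=> lt_rq lt_cq.
have size_r : (size (('X + 1 : {poly F}) ^+ r) <= q)%N.
  by apply/leq_sizeP => i le_qi; rewrite coef_exprXD1 bin_small // (leq_trans lt_rq).
have comp_Xq : (('X + 1) ^+ s) \Po 'X^q = ('X + 1 : {poly F}) ^+ (s * q).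
  by rewrite rmorphXn /= comp_polyD comp_polyX -polyC1 comp_polyC mulnC exprM exprXD1_card.
by rewrite -!coef_exprXD1 exprD -comp_Xq coefM_comp_polyXn.
Qed.

Lemma mulrn_binomial_lucas (V : lmodType F) (v : V) r s c e : (r < q)%N -> (c < q)%N ->
  v *+ 'C(r + s * q, c + e * q) = v *+ 'C(r, c) *+ 'C(s, e).
Proof. by move=> lt_rq lt_cq; rewrite -!scaler_nat scalerA mulrC -binomial_lucas. Qed.

End Lucas.

Section Digits.
Variable F : finFieldType.
Local Notation q := (q F).
Local Notation ndigits m := (topdigit F m).+1.

Lemma card_gt0 : (0 < q)%N.
Proof. exact: ltnW (card_gt1 F). Qed.

Lemma digit0 m : digit F m 0 = (m %% q)%N.
Proof. by rewrite /digit expn0 divn1. Qed.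

Lemma digitS m n : digit F m n.+1 = digit F (m %/ q) n.
Proof. by rewrite /digit expnS divnMA. Qed.

Lemma ltn_div_card_expS M m : (m < q ^ M.+1)%N -> (m %/ q < q ^ M)%N.
Proof. by move=> lt_m; rewrite ltn_divLR ?card_gt0 // -expnSr. Qed.

Lemma ltn_ndigits m : (m < q ^ ndigits m)%N.
Proof. exact: trunc_log_ltn (card_gt1 F). Qed.

Lemma leq_ndigits m n : (m <= n)%N -> (ndigits m <= ndigits n)%N.
Proof. by move=> le_mn; rewrite ltnS leq_trunc_log. Qed.

Lemma digit_ndigits m n : (ndigits m <= n)%N -> digit F m n = 0%N.
Proof.
move=> le_mn; rewrite /digit divn_small ?mod0n //.
by apply: leq_trans (ltn_ndigits m) _; rewrite leq_pexp2l // card_gt0.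
Qed.

End Digits.

Section DigitProduct.
Variables (F : finFieldType) (R : comAlgType F).
Local Notation q := (q F).
Local Notation ndigits m := (topdigit F m).+1.
Implicit Types (a b : nat -> R) (f g h : nat -> nat -> R).

Definition digit_prod M f m : R := \prod_(n < M) f n (digit F m n).

Lemma digit_prodS M f m :
  digit_prod M.+1 f m = f 0%N (m %% q)%N * digit_prod M (fun n => f n.+1) (m %/ q).
Proof.
rewrite /digit_prod big_ord_recl digit0; congr (_ * _).
by apply: eq_bigr => n _; rewrite digitS.
Qed.

Lemma digit_prod_widen M f m : (ndigits m <= M)%N -> (forall n, f n 0%N = 1) ->
  digit_prod M f m = digit_prod (ndigits m) f m.
Proof.
move=> le_mM f_0; rewrite /digit_prod -!(big_mkord xpredT (fun n => f n (digit F m n))).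
rewrite (big_cat_nat (leq0n _) le_mM) //= [X in _ * X]big1_seq ?mulr1 // => n.
by rewrite andTb mem_index_iota => /andP [le_mn _]; rewrite digit_ndigits.
Qed.

Lemma digit_prod_scale M (al : F) f g j : (j < q ^ M)%N ->
  (forall n r, (r < q)%N -> g n r = al ^+ r *: f n r) ->
  digit_prod M g j = al ^+ j *: digit_prod M f j.
Proof.
elim: M f g j => [|M IH] f g j lt_j g_f.
  move: lt_j; rewrite expn0 ltnS leqn0 => /eqP ->.
  by rewrite /digit_prod !big_ord0 scale1r.
have al_j : al ^+ j = al ^+ (j %% q) * al ^+ (j %/ q).
  by rewrite {1}(divn_eq j q) exprD mulnC exprM expf_card mulrC.
rewrite !digit_prodS g_f ?ltn_pmod ?card_gt0 // (IH _ _ _ _ (fun n => g_f n.+1)).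
  by rewrite -scalerAl -scalerAr scalerA al_j.
exact: ltn_div_card_expS.
Qed.

Definition binom_term a b j e : R := a e * b (j - e)%N *+ 'C(j, e).

Definition binom_conv a b j : R := \sum_(e < j.+1) binom_term a b j e.

Lemma binom_conv_widen a b j n : (j < n)%N ->
  binom_conv a b j = \sum_(e < n) binom_term a b j e.
Proof.
move=> lt_jn; rewrite /binom_conv (big_ord_widen _ _ lt_jn) big_mkcond.
by apply: eq_bigr => e _; case: ltnP => // /bin_small; rewrite /binom_term => ->.
Qed.

(* Lucas' theorem splits [C(j, e)] along the last base-q digits of [j] and [e]. *)
Lemma binom_conv_digits a0 b0 a b j :
  binom_conv (fun m => a0 (m %% q)%N * a (m %/ q)%N)
             (fun m => b0 (m %% q)%N * b (m %/ q)%N) j =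
  binom_conv a0 b0 (j %% q)%N * binom_conv a b (j %/ q)%N.
Proof.
set r := (j %% q)%N; set s := (j %/ q)%N.
have lt_rq : (r < q)%N by rewrite ltn_pmod ?card_gt0.
have def_j : j = (r + s * q)%N by rewrite addnC -divn_eq.
have lt_j : (j < s.+1 * q)%N by rewrite def_j mulSn ltn_add2r.
rewrite (binom_conv_widen _ _ lt_j) sum_ord_mul (binom_conv_widen _ _ lt_rq).
rewrite mulrC big_distrl; apply: eq_bigr => i _; rewrite big_distrr; apply: eq_bigr => c _.
rewrite /binom_term /=.
rewrite def_j mulrn_binomial_lucas // modn_addMl // divn_addMl //.
have [lt_rc | le_cr] := ltnP r c.
  by rewrite (bin_small lt_rc) !mulr0n mul0rn mulr0.
have le_is : (i <= s)%N by rewrite -ltnS.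
have -> : (r + s * q - (c + i * q) = (r - c) + (s - i) * q)%N.
  have : (i * q <= s * q)%N by rewrite leq_mul2r le_is orbT.
  rewrite mulnBl; lia.
rewrite modn_addMl ?divn_addMl ?(leq_ltn_trans (leq_subr c r)) //.
ring.
Qed.

Lemma digit_prod_binom_conv M f g h j : (j < q ^ M)%N ->
  (forall n r, (r < q)%N -> h n r = binom_conv (f n) (g n) r) ->
  digit_prod M h j = binom_conv (digit_prod M f) (digit_prod M g) j.
Proof.
elim: M f g h j => [|M IH] f g h j lt_j h_conv.
  move: lt_j; rewrite expn0 ltnS leqn0 => /eqP ->.
  by rewrite /binom_conv big_ord1 /binom_term /digit_prod !big_ord0 mulr1.
rewrite digit_prodS h_conv ?ltn_pmod ?card_gt0 // (IH _ _ _ _ _ (fun n => h_conv n.+1)).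
  rewrite -binom_conv_digits; apply: eq_bigr => e _.
  by rewrite /binom_term !digit_prodS.
exact: ltn_div_card_expS.
Qed.

Lemma exprD_binom_conv (y z : R) r :
  (y + z) ^+ r = binom_conv (fun c => y ^+ c) (fun c => z ^+ c) r.
Proof. by rewrite addrC exprDn; apply: eq_bigr => c _; rewrite /binom_term mulrC. Qed.

Definition dprime_pow (y : R) d := y ^+ d - (d == q.-1)%:R.

Lemma dprime_powD (y z : R) r : (r < q)%N ->
  dprime_pow (y + z) r = binom_conv (fun c => y ^+ c) (dprime_pow z) r.
Proof.
move=> lt_rq; rewrite /dprime_pow exprD_binom_conv /binom_conv /binom_term.
under [RHS]eq_bigr do rewrite mulrBr mulrnBl.
rewrite sumrB; congr (_ - _).
rewrite big_ord_recl big1 /= ?expr0 ?mul1r ?subn0 ?bin0 ?addr0 //.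
move=> i _; have lt_ir := ltn_ord i; rewrite /bump /=.
have /negbTE -> : (r - (1 + i) != q.-1)%N by lia.
by rewrite mulr0 mul0rn.
Qed.

Lemma dprime_powZ (al : F) (y : R) d : al != 0 ->
  dprime_pow (al *: y) d = al ^+ d *: dprime_pow y d.
Proof.
move=> al_neq0; rewrite /dprime_pow exprZn scalerBr; congr (_ - _).
have [-> | _] := eqVneq d q.-1; last by rewrite scaler0.
by rewrite expf_card_pred // scale1r.
Qed.

End DigitProduct.

Section Truncation.
Variable F : finFieldType.
Implicit Types (x y : ps F) (p : {poly F}).

Definition ps_approx N x p := forall k, (k < N)%N -> x k = p`_k.

Definition ps_trunc N x : {poly F} := \poly_(k < N) x k.

Lemma ps_truncP N x : ps_approx N x (ps_trunc N x).
Proof. by move=> k lt_kN; rewrite coef_poly lt_kN. Qed.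

Lemma ps_approx_inj x y (p : nat -> {poly F}) :
  (forall N, ps_approx N x (p N)) -> (forall N, ps_approx N y (p N)) -> x = y.
Proof.
by move=> x_p y_p; apply: functional_extensionality => k; rewrite (x_p k.+1) ?(y_p k.+1).
Qed.

Lemma ps_approx_one N : ps_approx N (ps_one F) 1.
Proof. by move=> k _; rewrite coef1 /ps_one; case: (k == 0%N). Qed.

Lemma ps_approx_add N x y p p' :
  ps_approx N x p -> ps_approx N y p' -> ps_approx N (ps_add x y) (p + p').
Proof. by move=> x_p y_p k lt_kN; rewrite coefD /ps_add x_p ?y_p. Qed.

Lemma ps_approx_sub N x y p p' :
  ps_approx N x p -> ps_approx N y p' -> ps_approx N (ps_sub x y) (p - p').
Proof. by move=> x_p y_p k lt_kN; rewrite coefB /ps_sub x_p ?y_p. Qed.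

Lemma ps_approx_scale N a x p : ps_approx N x p -> ps_approx N (ps_scale a x) (a *: p).
Proof. by move=> x_p k lt_kN; rewrite coefZ /ps_scale x_p. Qed.

Lemma ps_approx_mul N x y p p' :
  ps_approx N x p -> ps_approx N y p' -> ps_approx N (ps_mul x y) (p * p').
Proof.
move=> x_p y_p k lt_kN; rewrite coefM; apply: eq_bigr => i _.
have le_ik : (i <= k)%N by rewrite -ltnS.
by rewrite x_p ?y_p // (leq_ltn_trans _ lt_kN) ?leq_subr.
Qed.

Lemma ps_approx_pow N x p d : ps_approx N x p -> ps_approx N (ps_pow x d) (p ^+ d).
Proof.
move=> x_p; elim: d => [|d IH]; first exact: ps_approx_one.
by rewrite exprS; apply: ps_approx_mul.
Qed.

Lemma ps_approx_prod N M (s : nat -> ps F) (P : nat -> {poly F}) :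
  (forall n, ps_approx N (s n) (P n)) -> ps_approx N (ps_prod M s) (\prod_(n < M) P n).
Proof.
move=> s_P; rewrite -(big_mkord xpredT P) /index_iota subn0 /ps_prod.
elim: (iota 0 M) => [|n ns IH] /=; first by rewrite big_nil; exact: ps_approx_one.
by rewrite big_cons; apply: ps_approx_mul.
Qed.

Lemma ps_approx_sum N M (s : nat -> ps F) (P : nat -> {poly F}) :
  (forall e, (e < M)%N -> ps_approx N (s e) (P e)) ->
  ps_approx N (ps_sum M s) (\sum_(e < M) P e).
Proof. by move=> s_P k lt_kN; rewrite coef_sum; apply: eq_bigr => e _; apply: s_P. Qed.

Lemma hasse_add n x y : hasse n (ps_add x y) = ps_add (hasse n x) (hasse n y).
Proof. by apply: functional_extensionality => k; rewrite /hasse /ps_add mulrDr. Qed.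

Lemma hasse_scale n a x : hasse n (ps_scale a x) = ps_scale a (hasse n x).
Proof. by apply: functional_extensionality => k; rewrite /hasse /ps_scale mulrCA. Qed.

End Truncation.

Section HasseDigitProducts.
Variable F : finFieldType.
Local Notation q := (q F).
Local Notation ndigits m := (topdigit F m).+1.
Implicit Types (x u y : ps F) (P : nat -> {poly F}).

Lemma ps_approx_digit_prod N M m (B : nat -> ps F -> ps F) (b : nat -> {poly F} -> {poly F})
    (s : nat -> ps F) P :
  (ndigits m <= M)%N -> (forall p, b 0%N p = 1) ->
  (forall d y p, ps_approx N y p -> ps_approx N (B d y) (b d p)) ->
  (forall n, ps_approx N (s n) (P n)) ->
  ps_approx N (ps_prod (ndigits m) (fun n => B (digit F m n) (s n)))
    (digit_prod M (fun n d => b d (P n)) m).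
Proof.
move=> le_mM b_0 B_b s_P; rewrite digit_prod_widen //.
by apply: (@ps_approx_prod _ _ _ _ (fun n => b (digit F m n) (P n))) => n; apply: B_b.
Qed.

Lemma Dj_approx N M m y P : (ndigits m <= M)%N ->
  (forall n, ps_approx N (hasse n y) (P n)) ->
  ps_approx N (Dj m y) (digit_prod M (fun n d => P n ^+ d) m).
Proof.
move=> le_mM y_P; apply: (ps_approx_digit_prod (B := fun d y => ps_pow y d)
  (b := fun d p => p ^+ d) (s := fun n => hasse n y)) => //.
by move=> d z p; apply: ps_approx_pow.
Qed.

Lemma Dpj_approx N M m y P : (ndigits m <= M)%N ->
  (forall n, ps_approx N (hasse n y) (P n)) ->
  ps_approx N (Dpj m y) (digit_prod M (fun n d => dprime_pow (P n) d) m).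
Proof.
move=> le_mM y_P; apply: (ps_approx_digit_prod
  (B := fun d y => if d == q.-1 then ps_sub (ps_pow y d) (ps_one F) else ps_pow y d)
  (b := fun d p => dprime_pow p d) (s := fun n => hasse n y)) => //.
  move=> p; rewrite /dprime_pow (_ : (0 == q.-1)%N = false) ?subr0 //.
  by have := card_gt1 F; lia.
move=> d z p z_p; rewrite /dprime_pow; case: eqP => _.
  by apply: ps_approx_sub; [apply: ps_approx_pow | apply: ps_approx_one].
by rewrite subr0; apply: ps_approx_pow.
Qed.

Lemma Dj_scale j x al : Dj j (ps_scale al x) = ps_scale (al ^+ j) (Dj j x).
Proof.
pose P N n := ps_trunc N (hasse n x).
apply: (ps_approx_inj (p := fun N =>
  al ^+ j *: digit_prod (ndigits j) (fun n d => P N n ^+ d) j)).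
  move=> N; rewrite -(digit_prod_scale (g := fun n d => (al *: P N n) ^+ d)) ?ltn_ndigits //.
    by apply: Dj_approx => // n; rewrite hasse_scale; apply/ps_approx_scale/ps_truncP.
  by move=> n r _; rewrite exprZn.
by move=> N; apply/ps_approx_scale/Dj_approx => // n; apply: ps_truncP.
Qed.

Lemma Dpj_scale j x al : al != 0 -> Dpj j (ps_scale al x) = ps_scale (al ^+ j) (Dpj j x).
Proof.
move=> al_neq0; pose P N n := ps_trunc N (hasse n x).
apply: (ps_approx_inj (p := fun N =>
  al ^+ j *: digit_prod (ndigits j) (fun n d => dprime_pow (P N n) d) j)).
  move=> N; rewrite -(digit_prod_scale (g := fun n d => dprime_pow (al *: P N n) d))
    ?ltn_ndigits //.
    by apply: Dpj_approx => // n; rewrite hasse_scale; apply/ps_approx_scale/ps_truncP.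
  by move=> n r _; rewrite dprime_powZ.
by move=> N; apply/ps_approx_scale/Dpj_approx => // n; apply: ps_truncP.
Qed.

Lemma Dj_add j x u :
  Dj j (ps_add x u) =
  ps_sum j.+1 (fun e => ps_scale 'C(j, e)%:R (ps_mul (Dj e x) (Dj (j - e) u))).
Proof.
pose P N n := ps_trunc N (hasse n x); pose Q N n := ps_trunc N (hasse n u).
apply: (ps_approx_inj (p := fun N =>
  digit_prod (ndigits j) (fun n d => (P N n + Q N n) ^+ d) j)) => N.
  apply: Dj_approx => // n; rewrite hasse_add.
  by apply: ps_approx_add; apply: ps_truncP.
rewrite (digit_prod_binom_conv (f := fun n d => P N n ^+ d) (g := fun n d => Q N n ^+ d)).
- apply: ps_approx_sum => e lt_ej; rewrite /binom_term -scaler_nat.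
  have le_ej : (e <= j)%N by rewrite -ltnS.
  apply/ps_approx_scale/ps_approx_mul; apply: Dj_approx;
    rewrite ?leq_ndigits ?leq_subr // => n; apply: ps_truncP.
- exact: ltn_ndigits.
- by move=> n r _; apply: exprD_binom_conv.
Qed.

Lemma Dpj_add j x u :
  Dpj j (ps_add x u) =
  ps_sum j.+1 (fun e => ps_scale 'C(j, e)%:R (ps_mul (Dj e x) (Dpj (j - e) u))).
Proof.
pose P N n := ps_trunc N (hasse n x); pose Q N n := ps_trunc N (hasse n u).
apply: (ps_approx_inj (p := fun N =>
  digit_prod (ndigits j) (fun n d => dprime_pow (P N n + Q N n) d) j)) => N.
  apply: Dpj_approx => // n; rewrite hasse_add.
  by apply: ps_approx_add; apply: ps_truncP.
rewrite (digit_prod_binom_conv (f := fun n d => P N n ^+ d)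
  (g := fun n d => dprime_pow (Q N n) d)).
- apply: ps_approx_sum => e lt_ej; rewrite /binom_term -scaler_nat.
  have le_ej : (e <= j)%N by rewrite -ltnS.
  apply/ps_approx_scale/ps_approx_mul; [apply: Dj_approx | apply: Dpj_approx];
    rewrite ?leq_ndigits ?leq_subr // => n; apply: ps_truncP.
- exact: ltn_ndigits.
- by move=> n r lt_rq; apply: dprime_powD.
Qed.

End HasseDigitProducts.

Theorem proposition4 (F : finFieldType) (j : nat) (x u : ps F) :
  (forall alpha : F, alpha != 0 ->
     Dj j (ps_scale alpha x) = ps_scale (alpha ^+ j) (Dj j x)) /\
  Dj j (ps_add x u) =
    ps_sum j.+1 (fun e => ps_scale ('C(j, e))%:R (ps_mul (Dj e x) (Dj (j - e) u))) /\
  (forall alpha : F, alpha != 0 ->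
     Dpj j (ps_scale alpha x) = ps_scale (alpha ^+ j) (Dpj j x)) /\
  Dpj j (ps_add x u) =
    ps_sum j.+1 (fun e => ps_scale ('C(j, e))%:R (ps_mul (Dj e x) (Dpj (j - e) u))).
Proof.
split; first by move=> al _; apply: Dj_scale.
split; first exact: Dj_add.
split; first by move=> al; apply: Dpj_scale.
exact: Dpj_add.
Qed.
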